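(* For all $u\in C_c^\infty(0,\infty)$, $$\int_0^\infty\frac{u'(r)^2}{\sinh^2r}dr\ge\frac94\int_0^\infty\frac{u(r)^2}{\sinh^4r}dr+\int_0^\infty\frac{u(r)^2}{\sinh^2r}dr.$$ *)

From Stdlib Require Import Reals.
From Coquelicot Require Import Coquelicot.
Open Scope R_scope.

(* u is C^infinity on R (we consider functions on (0,oo) extended by zero). *)
Definition smooth (u : R -> R) : Prop := forall (n : nat) (x : R), ex_derive_n u n x.

Definition compact_support_pos (u : R -> R) : Prop :=
  exists a b : R, 0 < a /\ a <= b /\ forall x, (x < a \/ b < x) -> u x = 0.

Definition integral_0_oo (f : R -> R) : R :=
  RInt_gen f (at_right 0) (Rbar_locally p_infty).

(* Calibration with the weight w = (3 cosh r - sinh r) / (2 sinh^3 r): pointwise,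
   u'^2/sinh^2 - 9/4 u^2/sinh^4 - u^2/sinh^2 - (w u^2)' is a sum of squares once
   cosh^2 = 1 + sinh^2 is used, and (w u^2)' integrates to zero because u has compact
   support in (0, oo). *)

From Stdlib Require Import Reals Lra.
From Coquelicot Require Import Coquelicot.
Open Scope R_scope.

Definition hardy_weight (r : R) : R := (3 * cosh r - sinh r) / (2 * sinh r ^ 3).

Definition hardy_weight' (r : R) : R :=
  (3 * sinh r ^ 2 + 2 * sinh r * cosh r - 9 * cosh r ^ 2) / (2 * sinh r ^ 4).

Lemma sinh_gt0 (r : R) : 0 < r -> 0 < sinh r.
Proof. intro Hr; rewrite <- sinh_0; now apply sinh_lt. Qed.

Lemma cosh_sqr (r : R) : cosh r ^ 2 = 1 + sinh r ^ 2.
Proof.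
  assert (Hexp : exp r * exp (- r) = 1) by (rewrite <- exp_plus, Rplus_opp_r; apply exp_0).
  unfold cosh, sinh; nra.
Qed.

Lemma sinh_le_cosh (r : R) : sinh r <= cosh r.
Proof. unfold cosh, sinh; pose proof (exp_pos (- r)); lra. Qed.

Lemma is_derive_hardy_weight (r : R) : 0 < r ->
  is_derive hardy_weight r (hardy_weight' r).
Proof.
  intro Hr; pose proof (sinh_gt0 r Hr) as Hs.
  unfold hardy_weight, hardy_weight'.
  auto_derive; [change (2 * sinh r ^ 3 <> 0); pose proof (pow_lt _ 3 Hs); lra | field; lra].
Qed.

Lemma is_derive_hardy_weight_sqr (u : R -> R) (r : R) : 0 < r -> ex_derive u r ->
  is_derive (fun x => hardy_weight x * u x ^ 2) r
    (hardy_weight' r * u r ^ 2 + hardy_weight r * (2 * u r * Derive u r)).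
Proof.
  intros Hr Hu.
  apply (is_derive_mult hardy_weight (fun x => u x ^ 2)); [| | apply Rmult_comm].
  - now apply is_derive_hardy_weight.
  - replace (2 * u r * Derive u r) with (INR 2 * Derive u r * u r ^ Init.Nat.pred 2)
      by (simpl; ring).
    now apply is_derive_pow, Derive_correct.
Qed.

(* Using [cosh r ^ 2 = 1 + sinh r ^ 2], the gap is
   [((s q - (3 c - s) p / 2) ^ 2 + s (c - s) p ^ 2 / 2) / s ^ 4] with [s = sinh r], [c = cosh r]. *)
Lemma hardy_weight_calibration (r p q : R) : 0 < r ->
  9 / 4 * (p ^ 2 / sinh r ^ 4) + p ^ 2 / sinh r ^ 2
    + (hardy_weight' r * p ^ 2 + hardy_weight r * (2 * p * q))
  <= q ^ 2 / sinh r ^ 2.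
Proof.
  intro Hr.
  pose proof (sinh_gt0 r Hr) as Hs; pose proof (sinh_le_cosh r) as Hsc.
  pose proof (cosh_sqr r) as Hc2.
  unfold hardy_weight, hardy_weight'.
  set (s := sinh r) in *; set (c := cosh r) in *.
  assert (Hgap : q ^ 2 / s ^ 2 - (9 / 4 * (p ^ 2 / s ^ 4) + p ^ 2 / s ^ 2
      + ((3 * s ^ 2 + 2 * s * c - 9 * c ^ 2) / (2 * s ^ 4) * p ^ 2
         + (3 * c - s) / (2 * s ^ 3) * (2 * p * q)))
    = ((s * q - (3 * c - s) / 2 * p) ^ 2 + s * (c - s) / 2 * p ^ 2) / s ^ 4).
  { field_simplify; [| lra ..]. rewrite <- !(Rmult_comm (c ^ 2)), Hc2. field; lra. }
  assert (0 <= ((s * q - (3 * c - s) / 2 * p) ^ 2 + s * (c - s) / 2 * p ^ 2) / s ^ 4).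
  { apply Rmult_le_pos; [| apply Rlt_le, Rinv_0_lt_compat, pow_lt; lra].
    pose proof (pow2_ge_0 (s * q - (3 * c - s) / 2 * p)); pose proof (pow2_ge_0 p); nra. }
  lra.
Qed.

Lemma ex_RInt_continuous_pos (f : R -> R) (c d : R) : 0 < c <= d ->
  (forall x, 0 < x -> continuous f x) -> ex_RInt f c d.
Proof.
  intros Hcd Hf; apply (ex_RInt_continuous (V := R_CompleteNormedModule)).
  intros x Hx; apply Hf; rewrite Rmin_left in Hx; lra.
Qed.

Lemma is_RInt_vanishing (f : R -> R) (c d : R) :
  (forall x, Rmin c d < x < Rmax c d -> f x = 0) -> is_RInt f c d 0.
Proof.
  intro Hf.
  apply (is_RInt_ext (fun _ => 0)); [intros x Hx; symmetry; now apply Hf |].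
  pose proof (is_RInt_const (V := R_NormedModule) c d 0) as Hconst.
  change (scal (d - c) 0) with ((d - c) * 0) in Hconst.
  now rewrite Rmult_0_r in Hconst.
Qed.

Lemma Derive_vanishing_outside (u : R -> R) (a b : R) :
  (forall x, x < a \/ b < x -> u x = 0) -> forall x, x < a \/ b < x -> Derive u x = 0.
Proof.
  intros Hu x Hx; apply is_derive_unique.
  apply (is_derive_ext_loc (fun _ => 0)); [| apply (is_derive_const (V := R_NormedModule) 0)].
  apply filter_imp with (2 := open_or _ _ (open_lt a) (open_gt b) x Hx).
  intros t Ht; symmetry; now apply Hu.
Qed.

Lemma continuous_sqr_div_sinh_pow (g : R -> R) (n : nat) (x : R) : 0 < x ->
  ex_derive g x -> continuous (fun r => g r ^ 2 / sinh r ^ n) x.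
Proof.
  intros Hx Hg; apply (ex_derive_continuous (V := R_NormedModule)).
  auto_derive; repeat split; [exact Hg |].
  now apply pow_nonzero, Rgt_not_eq, sinh_gt0.
Qed.

Lemma continuous_hardy_weight_sqr_derivative (u : R -> R) (x : R) : 0 < x ->
  ex_derive u x -> ex_derive (Derive u) x ->
  continuous (fun r => hardy_weight' r * u r ^ 2 + hardy_weight r * (2 * u r * Derive u r)) x.
Proof.
  intros Hx Hu Hu'; apply (ex_derive_continuous (V := R_NormedModule)).
  pose proof (pow_lt _ 3 (sinh_gt0 x Hx)); pose proof (pow_lt _ 4 (sinh_gt0 x Hx)).
  unfold hardy_weight, hardy_weight'.
  auto_derive; simpl in *; repeat split; auto; lra.
Qed.

Lemma integral_0_oo_supported (f : R -> R) (a b : R) : 0 < a -> a <= b ->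
  (forall x, 0 < x -> continuous f x) -> (forall x, x < a \/ b < x -> f x = 0) ->
  integral_0_oo f = RInt f a b.
Proof.
  intros Ha Hab Hcont Hf; unfold integral_0_oo.
  apply is_RInt_gen_unique; intros P HP.
  apply (Filter_prod _ _ _ (fun x => x < a) (fun y => b < y)).
  - apply filter_imp with (2 := open_lt a 0 Ha); now intros x Hx _.
  - now exists b.
  - intros x y Hx Hy; exists (RInt f a b); split; [| now apply locally_singleton].
    cbn [fst snd].
    replace (RInt f a b) with (plus zero (plus (RInt f a b) zero))
      by now rewrite plus_zero_r, plus_zero_l.
    apply (is_RInt_Chasles (V := R_CompleteNormedModule) f x a);
      [| apply (is_RInt_Chasles (V := R_CompleteNormedModule) f a b)].
    + apply is_RInt_vanishing; intros t Ht; apply Hf.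
      rewrite Rmin_left, Rmax_right in Ht; lra.
    + now apply RInt_correct, ex_RInt_continuous_pos.
    + apply is_RInt_vanishing; intros t Ht; apply Hf.
      rewrite Rmin_left, Rmax_right in Ht; lra.
Qed.

Lemma integral_0_oo_sqr_div_sinh_pow (g : R -> R) (n : nat) (a b : R) : 0 < a -> a <= b ->
  (forall x, ex_derive g x) -> (forall x, x < a \/ b < x -> g x = 0) ->
  integral_0_oo (fun r => g r ^ 2 / sinh r ^ n) = RInt (fun r => g r ^ 2 / sinh r ^ n) a b.
Proof.
  intros Ha Hab Hg Hout; apply integral_0_oo_supported; [exact Ha | exact Hab | |].
  - intros x Hx; now apply continuous_sqr_div_sinh_pow.
  - intros x Hx; rewrite Hout by exact Hx; unfold Rdiv; ring.
Qed.

Lemma hardy_sinh_RInt (u : R -> R) (c d : R) : smooth u -> 0 < c <= d ->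
  u c = 0 -> u d = 0 ->
  9 / 4 * RInt (fun r => u r ^ 2 / sinh r ^ 4) c d + RInt (fun r => u r ^ 2 / sinh r ^ 2) c d
  <= RInt (fun r => Derive u r ^ 2 / sinh r ^ 2) c d.
Proof.
  intros Hsmooth Hcd Huc Hud.
  assert (Hu : forall x, ex_derive u x) by (intro x; exact (Hsmooth 1%nat x)).
  assert (Hu' : forall x, ex_derive (Derive u) x) by (intro x; exact (Hsmooth 2%nat x)).
  set (W' := fun r => hardy_weight' r * u r ^ 2 + hardy_weight r * (2 * u r * Derive u r)).
  assert (Hex : forall (g : R -> R) n, (forall x, ex_derive g x) ->
    ex_RInt (fun r => g r ^ 2 / sinh r ^ n) c d).
  { intros g n Hg; apply ex_RInt_continuous_pos; [exact Hcd |].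
    intros x Hx; now apply continuous_sqr_div_sinh_pow. }
  assert (HW' : is_RInt W' c d 0).
  { replace 0 with (minus (hardy_weight d * u d ^ 2) (hardy_weight c * u c ^ 2))
      by (rewrite Huc, Hud; unfold minus, plus, opp; simpl; ring).
    apply (is_RInt_derive (V := R_CompleteNormedModule) (fun r => hardy_weight r * u r ^ 2));
      intros x Hx; rewrite Rmin_left, Rmax_right in Hx by lra.
    - apply is_derive_hardy_weight_sqr; [lra | apply Hu].
    - apply continuous_hardy_weight_sqr_derivative; [lra | apply Hu | apply Hu']. }
  assert (Hsum : is_RInt (fun r => 9 / 4 * (u r ^ 2 / sinh r ^ 4) + u r ^ 2 / sinh r ^ 2 + W' r) c d
    (9 / 4 * RInt (fun r => u r ^ 2 / sinh r ^ 4) c d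
     + RInt (fun r => u r ^ 2 / sinh r ^ 2) c d + 0)).
  { apply (is_RInt_plus (V := R_CompleteNormedModule)); [| exact HW'].
    apply (is_RInt_plus (V := R_CompleteNormedModule));
      [apply (is_RInt_scal (V := R_CompleteNormedModule)) |];
      apply RInt_correct, Hex, Hu. }
  rewrite <- (Rplus_0_r (_ + RInt (fun r => u r ^ 2 / sinh r ^ 2) c d)),
    <- (is_RInt_unique _ _ _ _ Hsum).
  apply RInt_le; [lra | eexists; exact Hsum | apply Hex, Hu' |].
  intros x Hx; apply hardy_weight_calibration; lra.
Qed.

Theorem lemma6p1 (u : R -> R) :
  smooth u -> compact_support_pos u ->
  integral_0_oo (fun r => (Derive u r) ^ 2 / (sinh r) ^ 2) >=
    9 / 4 * integral_0_oo (fun r => (u r) ^ 2 / (sinh r) ^ 4)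
    + integral_0_oo (fun r => (u r) ^ 2 / (sinh r) ^ 2).
Proof.
  intros Hsmooth [a [b [Ha [Hab Hu]]]].
  assert (Hd : forall x, ex_derive u x) by (intro x; exact (Hsmooth 1%nat x)).
  assert (Hd' : forall x, ex_derive (Derive u) x) by (intro x; exact (Hsmooth 2%nat x)).
  assert (Ha' : 0 < a / 2) by lra.
  assert (Hab' : a / 2 <= b + 1) by lra.
  assert (Hwiden : forall g : R -> R, (forall x, x < a \/ b < x -> g x = 0) ->
    forall x, x < a / 2 \/ b + 1 < x -> g x = 0) by (intros g Hg x Hx; apply Hg; lra).
  rewrite !(integral_0_oo_sqr_div_sinh_pow u _ _ _ Ha' Hab' Hd (Hwiden u Hu)),
    (integral_0_oo_sqr_div_sinh_pow (Derive u) _ _ _ Ha' Hab' Hd'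
       (Hwiden _ (Derive_vanishing_outside u a b Hu))).
  apply Rle_ge, hardy_sinh_RInt; [exact Hsmooth | lra | apply Hu; lra | apply Hu; lra].
Qed.
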